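(* Let $(X_i)_{i\in\mathbb N}$, $(X'_i)_{i\in\mathbb N}$ and $Y$ be mutually independent random variables with $(X_i)_{i\in\mathbb N}\sim(X'_i)_{i\in\mathbb N}$. Suppose that for some $k\in\mathbb N$ there exists $\lambda>0$ with \[\prod_{i=k}^\infty\mathbb E\Big[e^{\lambda(X'_i-X_i)}\Big]<\infty.\] Then \[\mathbb P\Big(\exists j\in\mathbb N:\ Y+\sum_{i=1}^{k+j}X_i\le\sum_{i=k}^{k+j}X'_i\Big)\le\Big(\prod_{i=k}^\infty\mathbb E\Big[e^{\lambda(X'_i-X_i)}\Big]\Big)\,\mathbb E\Big[e^{-\lambda\left(Y+\sum_{i=1}^{k-1}X_i\right)}\Big].\] *)

From HB Require Import structures.
From mathcomp Require Import all_boot all_order all_algebra.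
From mathcomp Require Import all_classical all_reals all_analysis.
Set Implicit Arguments. Unset Strict Implicit. Unset Printing Implicit Defensive.
Import Order.TTheory GRing.Theory Num.Theory.
Local Open Scope classical_set_scope.
Local Open Scope ring_scope.

Definition mutually_independent {d} {T : measurableType d} {R : realType}
  (P : probability T R) {I : eqType} (Z : I -> T -> R) : Prop :=
  forall (J : seq I) (B : I -> set R),
    uniq J -> (forall i, i \in J -> measurable (B i)) ->
    P (\bigcap_(i in [set i | i \in J]) (Z i @^-1` B i)) =
    (\prod_(i <- J) P (Z i @^-1` B i))%E.

(* Equality in law of two sequences of random variables (as random elements
   of R^N with the product sigma-algebra), i.e. equality of all
   finite-dimensional distributions (which determine the law). *)
Definition same_law_seq {d} {T : measurableType d} {R : realType}
  (P : probability T R) (X X' : nat -> T -> R) : Prop :=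
  forall (n : nat) (B : nat -> set R), (forall i, measurable (B i)) ->
    P (\bigcap_(i in `I_n) (X i @^-1` B i)) =
    P (\bigcap_(i in `I_n) (X' i @^-1` B i)).

Definition fam3 {T R : Type} (X X' : nat -> T -> R) (Y : T -> R)
  (i : (nat + nat + unit)%type) : T -> R :=
  match i with
  | inl (inl n) => X n
  | inl (inr n) => X' n
  | inr _ => Y
  end.

From HB Require Import structures.
From mathcomp Require Import all_boot all_order all_algebra.
From mathcomp Require Import all_classical all_reals all_analysis.
From mathcomp Require Import measurable_realfun ring lra.
Set Implicit Arguments. Unset Strict Implicit. Unset Printing Implicit Defensive.
Import Order.TTheory GRing.Theory Num.Theory.
Local Open Scope classical_set_scope.
Local Open Scope ring_scope.

(* Write W = Y + X_1 + ... + X_(k-1) and D_n = sum_(i = k)^(k + n) (X'_i - X_i):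
   the event is that the walk D reaches W.  Let Q_n = exp (lambda (D_n - W)),
   frozen from the first n with W <= D_n on, so that Q_n >= 1 once the walk has
   crossed.  Before the crossing, the next factor exp (lambda (X'_m - X_m)) is
   independent of Q_n; after it, Q does not move.  Since each
   M_m = E exp (lambda (X'_m - X_m)) is at least 1 (X_m and X'_m are i.i.d., so
   M_m = E exp (lambda (X_m - X'_m)) and the two add up to at least 2), this
   gives E Q_(n+1) <= M_(k+n+1) E Q_n.  Hence
   P(crossed by time n) <= E Q_n <= M_k ... M_(k+n) E exp (- lambda W),
   and letting n go to infinity yields the claim.  The independence statements
   needed are obtained from the mutual independence of the coordinates by
   Dynkin's pi-lambda theorem. *)

Section g_sigma_measurable.
Context d (T : measurableType d) (G : set (set T)).
Hypothesis Gm : G `<=` measurable.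

Lemma g_sigma_sub_measurable : <<s G >> `<=` measurable.
Proof. by apply: smallest_sub => //; exact: sigma_algebra_measurable. Qed.

Lemma measurable_fun_of_g_sigma d' (U : sigmaRingType d') (f : T -> U) :
  measurable_fun (setT : set (g_sigma_algebraType G)) f -> measurable_fun setT f.
Proof.
move=> mf _ B mB; have := mf measurableT B mB.
by rewrite !setTI => /g_sigma_sub_measurable.
Qed.

End g_sigma_measurable.

Section independent_sigma_algebras.
Local Open Scope ereal_scope.
Context d (T : measurableType d) (R : realType) (P : probability T R).

Lemma lambda_system_indep (C : set T) : measurable C ->
  lambda_system setT [set A | measurable A /\ P (A `&` C) = P A * P C].
Proof.
move=> mC; have finP A : measurable A -> P A \is a fin_num.
  by move=> mA; exact: fin_num_measure.
split => //.
- by split => //; rewrite setTI probability_setT mul1e.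
- move=> A B BA [mA eA] [mB eB]; split; first exact: measurableD.
  have ltP A' : measurable A' -> P A' < +oo by move=> mA'; rewrite ltey_eq finP.
  rewrite setDE setIAC -setDE measureD ?ltP //; try exact: measurableI.
  rewrite setIAC (setIidr BA) measureD ?ltP // (setIidr BA).
  transitivity (P A * P C - P B * P C); first by congr (_ - _).
  by rewrite muleBl //; [exact: finP | exact/fin_num_adde_defr/finP].
- move=> F ndF HF; split; first by apply: bigcup_measurable => n _; case: (HF n).
  have mF n : measurable (F n) by case: (HF n).
  have mFC n : measurable (F n `&` C) by exact: measurableI.
  have ndFC : nondecreasing_seq (fun n => F n `&` C).
    by move=> n m nm; apply/subsetPset; apply: setSI; apply/subsetPset/ndF.
  have cvF := @nondecreasing_cvg_mu _ _ _ P _ mF (bigcup_measurable (fun n _ => mF n)) ndF.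
  have cvFC := @nondecreasing_cvg_mu _ _ _ P _ mFC (bigcup_measurable (fun n _ => mFC n)) ndFC.
  rewrite setI_bigcupl; apply: (cvg_unique (@ereal_hausdorff R) cvFC).
  have -> : P \o (fun n => F n `&` C) = (fun n => P (F n) * P C).
    by apply/funext => n /=; case: (HF n).
  exact: cvgeZr (finP _ mC) cvF.
Qed.

Lemma g_sigma_indep_with (G : set (set T)) (C : set T) :
  setI_closed G -> G `<=` measurable -> measurable C ->
  (forall A, G A -> P (A `&` C) = P A * P C) ->
  forall A, <<s G >> A -> P (A `&` C) = P A * P C.
Proof.
move=> GI Gm mC GC A sA.
have : <<s G >> `<=` [set A | measurable A /\ P (A `&` C) = P A * P C].
  apply: lambda_system_subset => //; first exact: lambda_system_indep.
  by move=> A' GA'; split; [exact: Gm | exact: GC].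
by move=> /(_ _ sA)[].
Qed.

Lemma g_sigma_indep (G1 G2 : set (set T)) :
  setI_closed G1 -> setI_closed G2 -> G1 `<=` measurable -> G2 `<=` measurable ->
  (forall A B, G1 A -> G2 B -> P (A `&` B) = P A * P B) ->
  forall A B, <<s G1 >> A -> <<s G2 >> B -> P (A `&` B) = P A * P B.
Proof.
move=> G1I G2I G1m G2m indepG A B sA sB.
have indepA B' : G2 B' -> P (A `&` B') = P A * P B'.
  move=> G2B'; apply: g_sigma_indep_with sA => //; first exact: G2m.
  by move=> A' G1A'; exact: indepG.
rewrite setIC muleC; apply: g_sigma_indep_with sB => //.
- exact: g_sigma_sub_measurable sA.
- by move=> B' G2B'; rewrite setIC muleC; exact: indepA.
Qed.

End independent_sigma_algebras.

Section ge0_integralM_indep.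
Local Open Scope ereal_scope.
Context d (T : measurableType d) (R : realType) (P : probability T R).
Variables (G1 G2 : set (set T)).
Hypotheses (G1m : G1 `<=` measurable) (G2m : G2 `<=` measurable).
Hypothesis indepG :
  forall A B, <<s G1 >> A -> <<s G2 >> B -> P (A `&` B) = P A * P B.

Local Notation T1 := (g_sigma_algebraType G1).
Local Notation T2 := (g_sigma_algebraType G2).

Let mid1 : measurable_fun setT (id : T -> T1).
Proof. by apply: (measurable_fun_of_g_sigma G1m); exact: (@measurable_id _ T1 setT). Qed.

Let mid2 : measurable_fun setT (id : T -> T2).
Proof. by apply: (measurable_fun_of_g_sigma G2m); exact: (@measurable_id _ T2 setT). Qed.

Let id1 : {mfun T >-> T1} := HB.pack (id : T -> T1) (isMeasurableFun.Build _ _ _ _ _ mid1).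
Let id2 : {mfun T >-> T2} := HB.pack (id : T -> T2) (isMeasurableFun.Build _ _ _ _ _ mid2).

Let mdiag : measurable_fun setT (fun x : T => ((x : T1), (x : T2))).
Proof. exact: measurable_fun_pair mid1 mid2. Qed.

Let diag : {mfun T >-> (T1 * T2)%type} :=
  HB.pack (fun x : T => ((x : T1), (x : T2))) (isMeasurableFun.Build _ _ _ _ _ mdiag).

(* Independence says that [x |-> (x, x)] pushes [P] forward to the product of
   its two marginals, which turns E[F G] = E[F] E[G] into Tonelli's theorem. *)
Let distribution_diag (A : set (T1 * T2)) : measurable A ->
  distribution P diag A = (distribution P id1 \x distribution P id2) A.
Proof.
by move=> mA; symmetry; apply: product_measure_unique => // A1 A2 mA1 mA2; apply: indepG.
Qed.

Lemma ge0_integralM_indep (F G : T -> \bar R) :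
  measurable_fun (setT : set T1) F -> (forall x, 0 <= F x) ->
  measurable_fun (setT : set T2) G -> (forall x, 0 <= G x) ->
  \int[P]_x (F x * G x) = \int[P]_x F x * \int[P]_x G x.
Proof.
move=> mF F0 mG G0.
pose FG := fun z : (T1 * T2)%type => F z.1 * G z.2.
have mFG : measurable_fun setT FG.
  apply: emeasurable_funM; first exact: measurableT_comp mF measurable_fst.
  exact: measurableT_comp mG measurable_snd.
have FG0 z : 0 <= FG z by rewrite mule_ge0.
transitivity (\int[P]_x (FG \o diag) x); first by [].
rewrite -ge0_integral_distribution //.
rewrite (eq_measure_integral (distribution P id1 \x distribution P id2)); last first.
  by move=> A mA _; exact: distribution_diag.
rewrite fubini_tonelli1 // /fubini_F /FG /=.
under eq_integral do rewrite ge0_integralZl //.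
rewrite ge0_integralZr //; last exact: integral_ge0.
by rewrite !ge0_integral_distribution.
Qed.

End ge0_integralM_indep.

Section cylinders.
Local Open Scope ereal_scope.
Context d (T : measurableType d) (R : realType) (I : eqType) (Z : I -> T -> R).
Hypothesis mZ : forall i, measurable_fun setT (Z i).

Definition cylinders (J : seq I) : set (set T) :=
  [set A | exists2 B : I -> set R, (forall i, measurable (B i)) &
     A = \bigcap_(i in [set i | i \in J]) Z i @^-1` B i].

Lemma cylinders_measurable J : cylinders J `<=` measurable.
Proof.
move=> _ [B mB ->]; apply: fin_bigcap_measurable => [|i _]; first exact: finite_seq.
by rewrite -[X in measurable X]setTI; exact: mZ.
Qed.

Lemma cylinders_setI_closed J : setI_closed (cylinders J).
Proof.
move=> _ _ [B1 mB1 ->] [B2 mB2 ->]; exists (fun i => B1 i `&` B2 i).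
  by move=> i; exact: measurableI.
by rewrite -bigcapI; apply: eq_bigcapr => i _; rewrite preimage_setI.
Qed.

Lemma measurable_cylinders_coord J i : i \in J ->
  measurable_fun (setT : set (g_sigma_algebraType (cylinders J))) (Z i).
Proof.
move=> iJ _ B mB; rewrite setTI; apply: sub_sigma_algebra.
exists (fun j => if j == i then B else setT) => [j|]; first by case: ifP.
apply/seteqP; split => [x Bx j _ /=|x /(_ i iJ)]; last by rewrite /= eqxx.
by case: eqP => [->|].
Qed.

Variable P : probability T R.
Hypothesis indepZ : mutually_independent P Z.

Lemma cylinders_indep J1 J2 A B : uniq (J1 ++ J2) ->
  cylinders J1 A -> cylinders J2 B -> P (A `&` B) = P A * P B.
Proof.
move=> uJ [B1 mB1 ->] [B2 mB2 ->].
move: (uJ); rewrite cat_uniq => /and3P[uJ1 /hasPn J2J1 uJ2].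
pose C i := if i \in J1 then B1 i else B2 i.
have CB1 : {in J1, C =1 B1} by move=> i iJ1; rewrite /C iJ1.
have CB2 : {in J2, C =1 B2} by move=> i /J2J1 iJ1; rewrite /C (negbTE iJ1).
have mC i : measurable (C i) by rewrite /C; case: ifP.
have bigcapC (J : seq I) (B' : I -> set R) : {in J, C =1 B'} ->
    \bigcap_(i in [set i | i \in J]) Z i @^-1` B' i =
    \bigcap_(i in [set i | i \in J]) Z i @^-1` C i.
  by move=> CB'; apply: eq_bigcapr => i iJ; rewrite CB'.
rewrite (bigcapC _ _ CB1) (bigcapC _ _ CB2).
have -> : \bigcap_(i in [set i | i \in J1]) Z i @^-1` C i `&`
          \bigcap_(i in [set i | i \in J2]) Z i @^-1` C i =
          \bigcap_(i in [set i | i \in J1 ++ J2]) Z i @^-1` C i.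
  apply/seteqP; split => [x [xJ1 xJ2] i /=|x xJ].
    by rewrite mem_cat => /orP[]; [exact: xJ1 | exact: xJ2].
  by split => i iJ; apply: xJ; rewrite /= mem_cat iJ ?orbT.
by rewrite !indepZ // big_cat.
Qed.

Lemma ge0_integralM_cylinders J1 J2 (f g : T -> R) : uniq (J1 ++ J2) ->
  measurable_fun (setT : set (g_sigma_algebraType (cylinders J1))) f ->
  (forall x, 0 <= f x)%R ->
  measurable_fun (setT : set (g_sigma_algebraType (cylinders J2))) g ->
  (forall x, 0 <= g x)%R ->
  \int[P]_x (f x * g x)%:E = \int[P]_x (f x)%:E * \int[P]_x (g x)%:E.
Proof.
move=> uJ mf f0 mg g0; under eq_integral do rewrite EFinM.
apply: (ge0_integralM_indep (G1 := cylinders J1) (G2 := cylinders J2));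
  try exact: cylinders_measurable.
- apply: g_sigma_indep; try exact: cylinders_setI_closed; try exact: cylinders_measurable.
  by move=> A B; exact: cylinders_indep.
- exact/measurable_EFinP.
- by move=> x; rewrite lee_fin.
- exact/measurable_EFinP.
- by move=> x; rewrite lee_fin.
Qed.

End cylinders.

Section measurable_real_functions.
Context d (T : measurableType d) (R : realType) (D : set T).

Lemma measurable_sum_in (I : eqType) (s : seq I) (h : I -> T -> R) :
  (forall i, i \in s -> measurable_fun D (h i)) ->
  measurable_fun D (fun x => \sum_(i <- s) h i x).
Proof.
elim: s => [|a s IHs] mh.
  by under eq_fun do rewrite big_nil; exact: measurable_cst.
under eq_fun do rewrite big_cons.
apply: measurable_funD; first by apply: mh; rewrite mem_head.
by apply: IHs => i si; apply: mh; rewrite in_cons si orbT.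
Qed.

Lemma measurable_expRM (c : R) (f : T -> R) :
  measurable_fun D f -> measurable_fun D (fun x => expR (c * f x)).
Proof.
move=> mf; apply: measurableT_comp; first exact: measurable_expR.
by apply: measurable_funM => //; exact: measurable_cst.
Qed.

End measurable_real_functions.

Lemma ge0_integralD_EFin d (T : measurableType d) (R : realType)
    (mu : {measure set T -> \bar R}) (f g : T -> R) :
  measurable_fun setT f -> (forall x, 0 <= f x) ->
  measurable_fun setT g -> (forall x, 0 <= g x) ->
  (\int[mu]_x (f x + g x)%:E = \int[mu]_x (f x)%:E + \int[mu]_x (g x)%:E)%E.
Proof.
move=> mf f0 mg g0; under eq_integral do rewrite EFinD.
apply: ge0_integralD => //; try exact/measurable_EFinP.
- by move=> x _; rewrite lee_fin.
- by move=> x _; rewrite lee_fin.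
Qed.

Lemma expR_add_expRN_ge2 (R : realType) (t : R) : 2 <= expR t + expR (- t).
Proof. by have := expR_ge1Dx t; have := expR_ge1Dx (- t); lra. Qed.

Lemma prode_ge1 (R : realDomainType) (I : Type) (s : seq I) (F : I -> \bar R) :
  (forall i, 1 <= F i)%E -> (1 <= \prod_(i <- s) F i)%E.
Proof.
move=> F1; elim/big_ind: _ => // x y x1 y1.
by rewrite -[1%E]mul1e lee_pmul.
Qed.

Lemma prode_le_cvg (R : realType) (F : nat -> \bar R) (a b : nat) (l : \bar R) :
  (forall i, 1 <= F i)%E -> (a <= b)%N ->
  (fun n => \prod_(a <= i < n) F i)%E @ \oo --> l ->
  (\prod_(a <= i < b) F i <= l)%E.
Proof.
move=> F1 ab /(cvge_ge _)-> //; exists b => // n /= bn.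
rewrite (@big_cat_nat _ _ _ b a n) //= lee_pemulr //; last exact: prode_ge1.
exact: le_trans lee01 (prode_ge1 _ F1).
Qed.

Section same_law.
Local Open Scope ereal_scope.
Context d (T : measurableType d) (R : realType) (P : probability T R).

Lemma same_law_seq_preimage (X X' : nat -> T -> R) i B :
  same_law_seq P X X' -> measurable B -> P (X i @^-1` B) = P (X' i @^-1` B).
Proof.
move=> law mB.
pose B' j := if j == i then B else setT.
have bigcapB (V : nat -> T -> R) :
    \bigcap_(j in `I_i.+1) V j @^-1` B' j = V i @^-1` B.
  apply/seteqP; split => [x /(_ i (ltnSn i))|x Bx j _]; first by rewrite /B' eqxx.
  by rewrite /B'; case: eqP => [->|].
by rewrite -!bigcapB; apply: law => j; rewrite /B'; case: ifP.
Qed.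

Lemma ge0_integral_comp_same_law (U V : T -> R) (f : R -> \bar R) :
  measurable_fun setT U -> measurable_fun setT V ->
  (forall B, measurable B -> P (U @^-1` B) = P (V @^-1` B)) ->
  measurable_fun setT f -> (forall r, 0 <= f r) ->
  \int[P]_x f (U x) = \int[P]_x f (V x).
Proof.
move=> mU mV UV mf f0.
pose Um : {mfun T >-> R} := HB.pack U (isMeasurableFun.Build _ _ _ _ _ mU).
pose Vm : {mfun T >-> R} := HB.pack V (isMeasurableFun.Build _ _ _ _ _ mV).
transitivity (\int[P]_x (f \o Um) x); first by [].
rewrite -ge0_integral_distribution //.
transitivity (\int[P]_x (f \o Vm) x); last by [].
rewrite -ge0_integral_distribution //.
by apply: eq_measure_integral => B mB _; exact: UV.
Qed.

End same_law.

Section exp_moment_ge1.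
Local Open Scope ereal_scope.
Context d (T : measurableType d) (R : realType) (P : probability T R).
Context (I : eqType) (Z : I -> T -> R).
Hypotheses (mZ : forall i, measurable_fun setT (Z i)) (indepZ : mutually_independent P Z).
Variables (a b : I).
Hypotheses (ab : a != b)
  (same_law_ab : forall B, measurable B -> P (Z a @^-1` B) = P (Z b @^-1` B)).

Let measurable_expR_coord (c : R) (i : I) :
  measurable_fun (setT : set (g_sigma_algebraType (cylinders Z [:: i])))
    (fun x => expR (c * Z i x)).
Proof. by apply: measurable_expRM; apply: measurable_cylinders_coord; rewrite mem_head. Qed.

Let integral_expR_diff (c : R) (u v : I) : u != v ->
  \int[P]_x (expR (c * (Z v x - Z u x)))%:E =
  \int[P]_x (expR (c * Z v x))%:E * \int[P]_x (expR (- c * Z u x))%:E.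
Proof.
move=> uv; have uvu : uniq ([:: v] ++ [:: u]) by rewrite /= inE andbT eq_sym.
rewrite -(ge0_integralM_cylinders mZ indepZ uvu (@measurable_expR_coord c v)
  (fun=> expR_ge0 _) (@measurable_expR_coord (- c) u) (fun=> expR_ge0 _)).
by apply: eq_integral => x _; rewrite -expRD; congr (expR _)%:E; ring.
Qed.

Let integral_expR_same_law (c : R) :
  \int[P]_x (expR (c * Z a x))%:E = \int[P]_x (expR (c * Z b x))%:E.
Proof.
apply: (ge0_integral_comp_same_law (f := fun r => (expR (c * r))%:E)) => //.
exact/measurable_EFinP/measurable_expRM.
Qed.

Lemma expR_diff_moment_ge1 (c : R) :
  1 <= \int[P]_x (expR (c * (Z b x - Z a x)))%:E.
Proof.
pose M := \int[P]_x (expR (c * (Z b x - Z a x)))%:E.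
have M'E : \int[P]_x (expR (c * (Z a x - Z b x)))%:E = M.
  have ba : b != a by rewrite eq_sym.
  rewrite /M (integral_expR_diff c ba) (integral_expR_diff c ab).
  by rewrite integral_expR_same_law -(integral_expR_same_law (- c)).
have mexp (u v : I) : measurable_fun setT (fun x => (expR (c * (Z v x - Z u x)))%:E).
  by apply/measurable_EFinP/measurable_expRM; exact: measurable_funB.
have M2 : 2%:E <= M + M.
  rewrite -{2}M'E /M -ge0_integralD //; try by move=> x _; rewrite lee_fin expR_ge0.
  rewrite -[2%:E]mule1 -(probability_setT P) -integral_cst //.
  apply: ge0_le_integral => //; first by move=> x _; rewrite lee_fin.
    exact: emeasurable_funD (mexp a b) (mexp b a).
  move=> x _; rewrite -EFinD lee_fin.
  have -> : (c * (Z a x - Z b x) = - (c * (Z b x - Z a x)))%R by ring.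
  exact: expR_add_expRN_ge2.
have M0 : 0 <= M by apply: integral_ge0 => x _; rewrite lee_fin expR_ge0.
move: M2 M0; rewrite /M; case: (\int[P]_x _) => [r | | ] //=.
- by rewrite -EFinD !lee_fin => ? ?; lra.
- by move=> _ _; exact: leey.
Qed.

End exp_moment_ge1.

Local Notation idx := (nat + nat + unit)%type.
Local Notation idxX n := (inl (inl n) : idx).
Local Notation idxX' n := (inl (inr n) : idx).
Local Notation idxY := (inr tt : idx).

Definition idx_before (m : nat) : seq idx :=
  idxY :: [seq idxX i | i <- iota 0 m] ++ [seq idxX' i | i <- iota 0 m].

Lemma mem_idx_before m (j : idx) : (j \in idx_before m) =
  match j with inl (inl i) | inl (inr i) => (i < m)%N | inr _ => true end.
Proof.
have inX i : (idxX i \in [seq idxX j | j <- iota 0 m]) = (i < m)%N.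
  by rewrite mem_map ?mem_iota // => u v [].
have inX' i : (idxX' i \in [seq idxX' j | j <- iota 0 m]) = (i < m)%N.
  by rewrite mem_map ?mem_iota // => u v [].
have notX i : (idxX' i \in [seq idxX j | j <- iota 0 m]) = false.
  by apply/mapP => -[].
have notX' i : (idxX i \in [seq idxX' j | j <- iota 0 m]) = false.
  by apply/mapP => -[].
by rewrite /idx_before inE mem_cat; case: j => [[i|i]|[]]; rewrite //= ?inX ?inX' ?notX ?notX' ?orbF.
Qed.

Lemma uniq_idx_before_at m : uniq (idx_before m ++ [:: idxX m; idxX' m]).
Proof.
rewrite cat_uniq /= !mem_idx_before ltnn /= andbT mem_cat negb_or cat_uniq.
rewrite !map_inj_uniq ?iota_uniq; try by move=> u v [].
apply/and3P; split => //; first by apply/andP; split; apply/mapP => -[].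
by rewrite andbT; apply/hasPn => _ /mapP[j _ ->]; apply/mapP => -[].
Qed.

Section crossing.
Variables (R : realType) (d : measure_display) (T : measurableType d).
Variables (P : probability T R) (X X' : nat -> T -> R) (Y : T -> R).
Hypotheses (mX : forall i, measurable_fun setT (X i))
  (mX' : forall i, measurable_fun setT (X' i)) (mY : measurable_fun setT Y).
Hypotheses (indep : mutually_independent P (fam3 X X' Y))
  (law : same_law_seq P X X').
Variables (k : nat) (lambda : R).
Hypotheses (k_ge1 : (1 <= k)%N) (lambda_gt0 : 0 < lambda).

Local Notation Z := (fam3 X X' Y).
Local Notation Fbefore m := (g_sigma_algebraType (cylinders Z (idx_before m))).
Local Notation Fat m := (g_sigma_algebraType (cylinders Z [:: idxX m; idxX' m])).

Let mZ i : measurable_fun setT (Z i).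
Proof. by case: i => [[i|i]|[]] /=. Qed.

Definition offset x := Y x + \sum_(1 <= i < k) X i x.
Definition gain n x := \sum_(k <= i < (k + n).+1) (X' i x - X i x).

Fixpoint crossed n x : bool :=
  if n is n'.+1 then crossed n' x || (offset x <= gain n x)
  else offset x <= gain 0 x.

Fixpoint stopped_exp n x : R :=
  if n is n'.+1 then
    if crossed n' x then stopped_exp n' x
    else expR (lambda * (gain n x - offset x))
  else expR (lambda * (gain 0 x - offset x)).

Definition incr_exp m x := expR (lambda * (X' m x - X m x)).

Lemma gain0 x : gain 0 x = X' k x - X k x.
Proof. by rewrite /gain addn0 big_nat1. Qed.

Lemma gainS n x : gain n.+1 x = gain n x + (X' (k + n.+1) x - X (k + n.+1) x).
Proof. by rewrite /gain !addnS big_nat_recr //; exact/leqW/leq_addr. Qed.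

Lemma crossing_iff j x :
  (Y x + \sum_(1 <= i < (k + j).+1) X i x <= \sum_(k <= i < (k + j).+1) X' i x)
  = (offset x <= gain j x).
Proof.
rewrite /offset /gain sumrB (@big_cat_nat _ _ _ k 1 (k + j).+1) //=; last first.
  by rewrite ltnW // ltnS leq_addr.
by rewrite addrA lerBrDr.
Qed.

Lemma crossed_of_le n x : offset x <= gain n x -> crossed n x.
Proof. by case: n => [|n] /= ->; rewrite ?orbT. Qed.

Lemma crossedP n x : crossed n x -> exists j, offset x <= gain j x.
Proof.
by elim: n => [|n IHn] /=; [exists 0 | case/orP => [/IHn|]; last exists n.+1].
Qed.

Lemma crossed_nondecreasing : nondecreasing_seq (fun n => [set x | crossed n x]).
Proof.
by apply/nondecreasing_seqP => n; apply/subsetPset => x /= ->.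
Qed.

Lemma crossing_event_bigcup :
  [set x | exists j, Y x + \sum_(1 <= i < (k + j).+1) X i x <=
                     \sum_(k <= i < (k + j).+1) X' i x]
  = \bigcup_n [set x | crossed n x].
Proof.
apply/seteqP; split => x /= [j].
- by rewrite crossing_iff => /crossed_of_le cx; exists j.
- by move=> _ /crossedP[j' cx]; exists j'; rewrite crossing_iff.
Qed.

Let measurable_before_X m i : (i < m)%N ->
  measurable_fun (setT : set (Fbefore m)) (X i).
Proof. by move=> im; apply: (measurable_cylinders_coord (i := idxX i)); rewrite mem_idx_before. Qed.

Let measurable_before_X' m i : (i < m)%N ->
  measurable_fun (setT : set (Fbefore m)) (X' i).
Proof. by move=> im; apply: (measurable_cylinders_coord (i := idxX' i)); rewrite mem_idx_before. Qed.

Let measurable_before_Y m : measurable_fun (setT : set (Fbefore m)) Y.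
Proof. by apply: (measurable_cylinders_coord (i := idxY)); rewrite mem_idx_before. Qed.

Let measurable_of_before m (f : T -> R) :
  measurable_fun (setT : set (Fbefore m)) f -> measurable_fun setT f.
Proof. by move=> mf; exact (measurable_fun_of_g_sigma (@cylinders_measurable _ _ _ _ _ mZ _) mf). Qed.

Let measurable_offset m : (k <= m)%N -> measurable_fun (setT : set (Fbefore m)) offset.
Proof.
move=> km; apply: measurable_funD => //; apply: measurable_sum_in => i.
by rewrite mem_index_iota => /andP[_ ik]; apply: measurable_before_X; exact: leq_trans km.
Qed.

Let measurable_gain n m : (k + n < m)%N -> measurable_fun (setT : set (Fbefore m)) (gain n).
Proof.
move=> knm; apply: measurable_sum_in => i; rewrite mem_index_iota => /andP[_ ikn].
have im : (i < m)%N by exact: leq_trans knm.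
by apply: measurable_funB; [exact: measurable_before_X' | exact: measurable_before_X].
Qed.

Let leq_k_of_lt n m : (k + n < m)%N -> (k <= m)%N.
Proof. by move=> knm; rewrite (leq_trans (leq_addr n k)) // ltnW. Qed.

Let lt_of_ltS n m : (k + n.+1 < m)%N -> (k + n < m)%N.
Proof. by rewrite addnS => /ltnW. Qed.

Let measurable_crossing_exp n m : (k + n < m)%N ->
  measurable_fun (setT : set (Fbefore m)) (fun x => expR (lambda * (gain n x - offset x))).
Proof.
move=> knm; apply: measurable_expRM; apply: measurable_funB; first exact: measurable_gain.
by apply: measurable_offset; exact: leq_k_of_lt knm.
Qed.

Let measurable_crossed n m : (k + n < m)%N ->
  measurable_fun (setT : set (Fbefore m)) (crossed n).
Proof.
have measurable_le j : (k + j < m)%N ->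
    measurable_fun (setT : set (Fbefore m)) (fun x => offset x <= gain j x).
  move=> kjm; apply: measurable_fun_ler; last exact: measurable_gain.
  by apply: measurable_offset; exact: leq_k_of_lt kjm.
elim: n => [|n IHn] knm /=; first exact: measurable_le.
by apply: measurable_or; [apply: IHn; exact: lt_of_ltS knm | exact: measurable_le].
Qed.

Let measurable_stopped_exp n m : (k + n < m)%N ->
  measurable_fun (setT : set (Fbefore m)) (stopped_exp n).
Proof.
elim: n => [|n IHn] knm /=; first exact: measurable_crossing_exp.
apply: measurable_fun_ifT; last exact: measurable_crossing_exp.
  by apply: measurable_crossed; exact: lt_of_ltS knm.
by apply: IHn; exact: lt_of_ltS knm.
Qed.

Let measurable_incr_exp m : measurable_fun (setT : set (Fat m)) (incr_exp m).
Proof.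
apply: measurable_expRM; apply: measurable_funB.
- by apply: (measurable_cylinders_coord (i := idxX' m)); rewrite !inE eqxx orbT.
- by apply: (measurable_cylinders_coord (i := idxX m)); rewrite mem_head.
Qed.

Lemma measurable_crossed_set n : measurable [set x | crossed n x].
Proof.
have /measurable_fun_of_g_sigma mc := @measurable_crossed n (k + n).+1 (ltnSn _).
have := mc (cylinders_measurable mZ (J := idx_before (k + n).+1)) measurableT [set true] I.
by rewrite setTI.
Qed.

Lemma stopped_exp_ge0 n x : 0 <= stopped_exp n x.
Proof. by elim: n => [|n IHn] /=; [exact: expR_ge0 | case: ifP => // _; exact: expR_ge0]. Qed.

Lemma stopped_exp_uncrossed n x : ~~ crossed n x ->
  stopped_exp n x = expR (lambda * (gain n x - offset x)).
Proof. by case: n => [//|n] /=; rewrite negb_or => /andP[/negbTE-> _]. Qed.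

Lemma stopped_exp_ge1 n x : crossed n x -> 1 <= stopped_exp n x.
Proof.
have expR_ge1 (t : R) : 0 <= t -> 1 <= expR t by move=> t0; rewrite -expR0 ler_expR.
elim: n => [|n IHn] /=; first by move=> cx; rewrite expR_ge1 // mulr_ge0 ?subr_ge0 // ltW.
case: ifP => [cx _|_ /= cx]; first exact: IHn.
by rewrite expR_ge1 // mulr_ge0 ?subr_ge0 // ltW.
Qed.

Lemma stopped_exp0 x : stopped_exp 0 x = expR (- (lambda * offset x)) * incr_exp k x.
Proof. by rewrite /= /incr_exp -expRD gain0; congr expR; ring. Qed.

Lemma prob_crossed_le n :
  (P [set x | crossed n x] <= \int[P]_x (stopped_exp n x)%:E)%E.
Proof.
rewrite -[[set x | crossed n x]]setIT -integral_indic //; last exact: measurable_crossed_set.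
apply: ge0_le_integral => //.
- exact/measurable_EFinP/measurable_indic/measurable_crossed_set.
- apply/measurable_EFinP/(@measurable_of_before (k + n).+1).
  exact: measurable_stopped_exp.
move=> x _; rewrite lee_fin indicE; case: (boolP (crossed n x)) => cx.
  by rewrite mem_set //; exact: stopped_exp_ge1.
by rewrite memNset ?stopped_exp_ge0 //; exact/negP.
Qed.

Lemma incr_exp_moment_ge1 i : (1 <= \int[P]_x (incr_exp i x)%:E)%E.
Proof.
apply: (expR_diff_moment_ge1 mZ indep (a := idxX i) (b := idxX' i)) => // B mB.
exact: same_law_seq_preimage.
Qed.

Let ge0_integralM_before_at m (f : T -> R) :
  measurable_fun (setT : set (Fbefore m)) f -> (forall x, 0 <= f x) ->
  (\int[P]_x (f x * incr_exp m x)%:E =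
   \int[P]_x (f x)%:E * \int[P]_x (incr_exp m x)%:E)%E.
Proof.
move=> mf f0; apply: (ge0_integralM_cylinders mZ indep (uniq_idx_before_at m) mf f0).
  exact: measurable_incr_exp.
by move=> x; exact: expR_ge0.
Qed.

Lemma integral_stopped_exp0 :
  (\int[P]_x (stopped_exp 0 x)%:E =
   \int[P]_x (expR (- (lambda * offset x)))%:E * \int[P]_x (incr_exp k x)%:E)%E.
Proof.
under eq_integral do rewrite stopped_exp0.
apply: ge0_integralM_before_at => [|x]; last exact: expR_ge0.
under eq_fun do rewrite -mulNr.
by apply: measurable_expRM; exact: measurable_offset.
Qed.

Definition crossed_part n x := if crossed n x then stopped_exp n x else 0.
Definition uncrossed_part n x := if crossed n x then 0 else stopped_exp n x.

Lemma stopped_exp_parts n x : stopped_exp n x = crossed_part n x + uncrossed_part n x.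
Proof. by rewrite /crossed_part /uncrossed_part; case: ifP; rewrite ?addr0 ?add0r. Qed.

Lemma stopped_expS_parts n x : stopped_exp n.+1 x =
  crossed_part n x + uncrossed_part n x * incr_exp (k + n.+1) x.
Proof.
rewrite /= /crossed_part /uncrossed_part; case: ifPn => [_|ncx].
  by rewrite mul0r addr0.
by rewrite add0r stopped_exp_uncrossed // /incr_exp -expRD gainS; congr expR; ring.
Qed.

Let crossed_part_ge0 n x : 0 <= crossed_part n x.
Proof. by rewrite /crossed_part; case: ifP => // _; exact: stopped_exp_ge0. Qed.

Let uncrossed_part_ge0 n x : 0 <= uncrossed_part n x.
Proof. by rewrite /uncrossed_part; case: ifP => // _; exact: stopped_exp_ge0. Qed.

Let measurable_crossed_part n :
  measurable_fun (setT : set (Fbefore (k + n.+1))) (crossed_part n).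
Proof.
have kn : (k + n < k + n.+1)%N by rewrite addnS.
apply: measurable_fun_ifT; [exact: measurable_crossed | exact: measurable_stopped_exp |].
exact: measurable_cst.
Qed.

Let measurable_uncrossed_part n :
  measurable_fun (setT : set (Fbefore (k + n.+1))) (uncrossed_part n).
Proof.
have kn : (k + n < k + n.+1)%N by rewrite addnS.
apply: measurable_fun_ifT; [exact: measurable_crossed | exact: measurable_cst |].
exact: measurable_stopped_exp.
Qed.

Lemma integral_stopped_expS_le n :
  (\int[P]_x (stopped_exp n.+1 x)%:E <=
   \int[P]_x (incr_exp (k + n.+1) x)%:E * \int[P]_x (stopped_exp n x)%:E)%E.
Proof.
have mc := measurable_of_before (@measurable_crossed_part n).
have mu := measurable_of_before (@measurable_uncrossed_part n).
have mincr : measurable_fun setT (incr_exp (k + n.+1)).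
  by apply: measurable_expRM; exact: measurable_funB.
have intc0 : (0 <= \int[P]_x (crossed_part n x)%:E)%E.
  by apply: integral_ge0 => x _; rewrite lee_fin.
have intu0 : (0 <= \int[P]_x (uncrossed_part n x)%:E)%E.
  by apply: integral_ge0 => x _; rewrite lee_fin.
under eq_integral do rewrite stopped_expS_parts.
rewrite ge0_integralD_EFin //; last 2 first.
- exact: measurable_funM.
- by move=> x; rewrite mulr_ge0 // expR_ge0.
under [X in (_ <= _ * X)%E]eq_integral do rewrite stopped_exp_parts.
rewrite ge0_integralM_before_at // ge0_integralD_EFin // (ge0_muleDr _ intc0 intu0).
apply: leeD; last by rewrite muleC.
exact: lee_pemull (incr_exp_moment_ge1 _).
Qed.

Lemma integral_stopped_exp_le n :
  (\int[P]_x (stopped_exp n x)%:E <=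
   (\prod_(k <= i < (k + n).+1) \int[P]_x (incr_exp i x)%:E) *
   \int[P]_x (expR (- (lambda * offset x)))%:E)%E.
Proof.
elim: n => [|n IHn]; first by rewrite addn0 big_nat1 integral_stopped_exp0 muleC.
apply: le_trans (integral_stopped_expS_le n) _.
rewrite addnS big_nat_recr /=; last by rewrite ltnW // ltnS leq_addr.
rewrite muleAC [X in (_ <= X)%E]muleC; apply: lee_wpmul2l IHn.
by apply: integral_ge0 => x _; rewrite lee_fin expR_ge0.
Qed.

End crossing.

Theorem lemma3p4 (R : realType) (d : measure_display) (T : measurableType d)
  (P : probability T R) (X X' : nat -> T -> R) (Y : T -> R)
  (mX : forall i, measurable_fun setT (X i))
  (mX' : forall i, measurable_fun setT (X' i))
  (mY : measurable_fun setT Y)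
  (indep : mutually_independent P (fam3 X X' Y))
  (law : same_law_seq P X X')
  (k : nat) (k_ge1 : (1 <= k)%N) (lambda : R) (lambda_gt0 : 0 < lambda)
  (p : R)
  (prod_fin : (fun n : nat => (\prod_(k <= i < n)
        \int[P]_x (expR (lambda * (X' i x - X i x)))%:E)%E) @ \oo --> p%:E) :
  (P [set x | exists j : nat,
        (
        Y x + \sum_(1 <= i < (k + j).+1) X i x <= \sum_(k <= i < (k + j).+1) X' i x)%R]
   <= p%:E * \int[P]_x (expR (- (lambda * (Y x + \sum_(1 <= i < k) X i x))))%:E)%E.
Proof.
rewrite (crossing_event_bigcup X X' Y k_ge1).
have mcrossed := measurable_crossed_set mX mX' mY k.
have cvg_crossed := @nondecreasing_cvg_mu _ _ _ P _ mcrossed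
  (bigcup_measurable (fun n _ => mcrossed n)) (crossed_nondecreasing X X' Y k).
apply: (cvge_le _ cvg_crossed); apply: nearW => n.
apply: le_trans (prob_crossed_le P mX mX' mY k lambda_gt0 n) _.
apply: le_trans (integral_stopped_exp_le mX mX' mY indep law k lambda n) _.
apply: lee_wpmul2r; first by apply: integral_ge0 => x _; rewrite lee_fin expR_ge0.
apply: prode_le_cvg prod_fin; last by rewrite ltnW // ltnS leq_addr.
exact: incr_exp_moment_ge1 mX mX' mY indep law lambda.
Qed.
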